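(* Assume that the following hold: (i) there exist positive finite constants $g_1,g_2$ such that for all large enough $r$, $\mathbb{E}[X_r]\in\mu r+[-g_1r^{1/3},-g_2r^{1/3}]$; (ii) there exist constants $\delta>0$, $C>0$, $r_1$ such that for all $r>r_1$, $\mathbb{P}(X_r-\mu r>Cr^{1/3})\ge\delta$. Then there exist constants $c>0$, $\eta>0$, $\theta_0$ and $r_0$ such that for all $r>r_0$ and $\theta_0<\theta<\eta r^{2/3}$, $$\mathbb{P}\left(X_r-\mathbb{E}[X_r]\ge\theta r^{1/3}\right)\ge\exp\left(-c\theta^{3/2}\right).$$
   Context: Let $\{\xi_v:v\in\mathbb{Z}^2\}$ be i.i.d. random variables with a common law $\nu$ supported on $[0,\infty)$. A directed path is an up-right nearest-neighbour path in $\mathbb{Z}^2$, and its weight is $\ell(\gamma)=\sum_{u\in\gamma}\xi_u$. For $u\preceq v$ coordinatewise, $X_{u,v}=\max_{\gamma:u\to v}\ell(\gamma)$ over directed paths from $u$ to $v$. For $r\in\mathbb{N}$, $X_r=X_{(1,1),(r,r)}$. It is assumed that $\mu=\lim_{r\to\infty}r^{-1}\mathbb{E}[X_r]<\infty$. *)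

From HB Require Import structures.
From mathcomp Require Import all_boot all_order all_algebra.
From mathcomp Require Import all_classical all_reals all_analysis.
Set Implicit Arguments. Unset Strict Implicit. Unset Printing Implicit Defensive.
Import Order.TTheory GRing.Theory Num.Theory.
Local Open Scope classical_set_scope.
Local Open Scope ring_scope.

(* A directed (up-right) path starting at (1,1) is
   encoded by its step sequence s : seq bool (false = step (1,0), true = step
   (0,1)). *)
Definition path_pt (s : seq bool) (k : nat) : int * int :=
  let t := take k s in
  (((1 + count negb t)%N)%:Z, ((1 + count id t)%N)%:Z).

Definition path_weight {T : Type} {R : realType} (xi : int * int -> T -> R)
  (s : seq bool) (w : T) : R :=
  \sum_(k < (size s).+1) xi (path_pt s k) w.

(* X_r = X_{(1,1),(r,r)}: maximum over all directed paths from (1,1) to (r,r),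
   i.e. over step sequences of length 2(r-1) with exactly r-1 up-steps.
   (The seed of the big max is itself one such path, so this is an honest max.) *)
Definition LPP {T : Type} {R : realType} (xi : int * int -> T -> R)
  (r : nat) (w : T) : R :=
  \big[Num.max/path_weight xi (nseq r.-1 false ++ nseq r.-1 true) w]_(s : (r.-1 + r.-1).-tuple bool | count id s == r.-1)
    path_weight xi s w.

Definition mutually_independent {d} {T : measurableType d} {R : realType}
  (P : probability T R) {I : eqType} (X : I -> T -> R) : Prop :=
  forall (s : seq I) (B : I -> set R), uniq s ->
    (forall i, measurable (B i)) ->
    P (\bigcap_(i in [set` s]) (X i @^-1` B i)) =
      (\prod_(i <- s) P (X i @^-1` B i))%E.

From HB Require Import structures.
From mathcomp Require Import all_boot all_order all_algebra.
From mathcomp Require Import all_classical all_reals all_analysis.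
From mathcomp Require Import measurable_realfun zify ring lra.
Import Order.TTheory GRing.Theory Num.Theory.
Local Open Scope classical_set_scope.
Local Open Scope ring_scope.
Set Implicit Arguments. Unset Strict Implicit. Unset Printing Implicit Defensive.

(* Cut the diagonal into k = j^3 consecutive blocks of side m ~ r / k,
   joined by a right and an up step; as the weights are nonnegative, X_r dominates the sum
   of the last passage values of the blocks.  These live on disjoint columns, so they are
   independent copies of X_m, each exceeding mu m + C m^(1/3) with probability at least
   delta by (ii).  Hence X_r >= k (mu m + C m^(1/3)) ~ mu r + C j^2 r^(1/3) / 2 with
   probability at least delta^k.  Writing theta = C s^2 and taking 2 s < j <= 3 s, this
   exceeds E[X_r] + theta r^(1/3) because E[X_r] <= mu r by (i), while
   delta^k >= exp (- 27 s^3 ln (1 / delta)) = exp (- c theta^(3/2)). *)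

Section PathWeights.
Variables (T : Type) (R : realType).
Implicit Types (xi : int * int -> T -> R) (s : seq bool).

Definition site_add (v a : int * int) : int * int := (v.1 + a.1, v.2 + a.2).

Definition translate (a : int * int) xi : int * int -> T -> R :=
  fun v w => xi (site_add v a) w.

Definition path_disp s : int * int := ((count negb s)%:Z, (count id s)%:Z).

Definition tail_weight xi s w := \sum_(k < size s) xi (path_pt s k.+1) w.

Lemma path_pt0 s : path_pt s 0 = (1%:Z, 1%:Z).
Proof. by rewrite /path_pt take0. Qed.

Lemma path_weightE xi s w : path_weight xi s w = xi (1%:Z, 1%:Z) w + tail_weight xi s w.
Proof. by rewrite /path_weight big_ord_recl /= path_pt0. Qed.

Lemma path_pt_catl s1 s2 k : (k <= size s1)%N -> path_pt (s1 ++ s2) k = path_pt s1 k.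
Proof. by move=> k_le; rewrite /path_pt takel_cat. Qed.

Lemma path_pt_catr s1 s2 k :
  path_pt (s1 ++ s2) (size s1 + k) = site_add (path_pt s2 k) (path_disp s1).
Proof.
rewrite /path_pt /site_add /path_disp take_cat ltnNge leq_addr /= addKn !count_cat.
by congr (_, _); rewrite -!PoszD; congr Posz; lia.
Qed.

Lemma tail_weight_cat xi s1 s2 w :
  tail_weight xi (s1 ++ s2) w =
    tail_weight xi s1 w + tail_weight (translate (path_disp s1) xi) s2 w.
Proof.
rewrite /tail_weight size_cat big_split_ord /=; congr (_ + _).
  by apply: eq_bigr => i _; rewrite path_pt_catl.
by apply: eq_bigr => i _; rewrite /translate -path_pt_catr addnS.
Qed.

Lemma tail_weight_ge0 xi s w : (forall v, 0 <= xi v w) -> 0 <= tail_weight xi s w.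
Proof. by move=> xi_ge0; apply: sumr_ge0 => i _. Qed.

Lemma path_weight_le_LPP xi r s w :
  size s = (r.-1 + r.-1)%N -> count id s = r.-1 -> path_weight xi s w <= LPP xi r w.
Proof.
move=> /eqP size_s count_s; rewrite /LPP.
by apply: (bigmax_sup (Tuple size_s)) => //=; apply/eqP.
Qed.

Lemma LPP_attained xi r w : exists s : seq bool,
  [/\ size s = (r.-1 + r.-1)%N, count id s = r.-1 & LPP xi r w = path_weight xi s w].
Proof.
pose diag_weight y := exists s : seq bool,
  [/\ size s = (r.-1 + r.-1)%N, count id s = r.-1 & y = path_weight xi s w].
rewrite /LPP; apply: (big_ind diag_weight) => [|x y [s1 [? ? ->]] [s2 [? ? ->]]|s /eqP count_s].
- exists (nseq r.-1 false ++ nseq r.-1 true).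
  by rewrite size_cat count_cat !size_nseq !count_nseq /= mul0n mul1n.
- by case: leP => _; [exists s2 | exists s1].
- by exists (tval s); rewrite size_tuple.
Qed.

Lemma count_negb_balanced r s :
  size s = (r + r)%N -> count id s = r -> count negb s = r.
Proof. by move=> size_s count_s; have := count_predC id s; rewrite size_s count_s => /addnI. Qed.

Lemma eq_LPP {T' : Type} xi (xi' : int * int -> T' -> R) r w w' : (0 < r)%N ->
  (forall a b, (a < r)%N -> (b < r)%N ->
     xi (a.+1%:Z, b.+1%:Z) w = xi' (a.+1%:Z, b.+1%:Z) w') ->
  LPP xi r w = LPP xi' r w'.
Proof.
move=> r_gt0 eq_box.
have eq_weight s : size s = (r.-1 + r.-1)%N -> count id s = r.-1 ->
    path_weight xi s w = path_weight xi' s w'.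
  move=> size_s count_s; apply: eq_bigr => k _; rewrite /path_pt.
  have count_take (p : pred bool) : (count p (take k s) <= count p s)%N.
    by rewrite -[in X in (_ <= X)%N](cat_take_drop k s) count_cat leq_addr.
  have := count_take negb; have := count_take id.
  rewrite (count_negb_balanced size_s count_s) count_s => ? ?.
  by apply: eq_box; lia.
set seed := nseq r.-1 false ++ nseq r.-1 true.
have seed_size : size seed = (r.-1 + r.-1)%N by rewrite /seed size_cat !size_nseq.
have seed_count : count id seed = r.-1 by rewrite /seed count_cat !count_nseq /= mul0n mul1n.
rewrite /LPP (eq_weight _ seed_size seed_count).
by apply: eq_bigr => s /eqP count_s; apply: eq_weight; rewrite ?size_tuple.
Qed.

End PathWeights.

Section Superadditivity.
Variables (T : Type) (R : realType).
Implicit Types (xi : int * int -> T -> R) (S : nat -> seq bool).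

Definition diag_site (m j : nat) : int * int := ((j * m)%:Z, (j * m)%:Z).

Definition concat_blocks S k : seq bool :=
  flatten [seq S j ++ [:: false; true] | j <- iota 0 k].

Lemma concat_blocksS S k : concat_blocks S k.+1 = concat_blocks S k ++ (S k ++ [:: false; true]).
Proof. by rewrite /concat_blocks -addn1 iotaD map_cat flatten_cat /= cats0. Qed.

Lemma size_concat_blocks S m k : (forall j, size (S j) = (m.-1 + m.-1)%N) -> (0 < m)%N ->
  size (concat_blocks S k) = (k * (m + m))%N.
Proof.
by move=> size_S m_gt0; elim: k => [|k IHk] //; rewrite concat_blocksS !size_cat IHk size_S /=; lia.
Qed.

Lemma path_disp_cat s1 s2 : path_disp (s1 ++ s2) = site_add (path_disp s1) (path_disp s2).
Proof. by rewrite /path_disp /site_add !count_cat !PoszD. Qed.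

Section DiagonalBlocks.
Variables (S : nat -> seq bool) (m : nat).
Hypotheses (m_gt0 : (0 < m)%N) (disp_S : forall j, path_disp (S j) = (m.-1%:Z, m.-1%:Z)).

Lemma path_disp_concat_blocks k : path_disp (concat_blocks S k) = diag_site m k.
Proof.
elim: k => [|k IHk] //; rewrite concat_blocksS !path_disp_cat IHk disp_S /site_add /=.
by congr (_, _); rewrite -!PoszD; congr Posz; lia.
Qed.

(* Of the two sites of the corner after block [k], the first is dropped and the second
   starts block [k.+1]. *)
Lemma sum_block_weights_le xi k w : (forall v, 0 <= xi v w) ->
  \sum_(j < k) path_weight (translate (diag_site m j) xi) (S j) w
    + xi (site_add (1%:Z, 1%:Z) (diag_site m k)) w
  <= path_weight xi (concat_blocks S k) w.
Proof.
move=> xi_ge0; elim: k => [|k IHk].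
  by rewrite big_ord0 add0r /path_weight big_ord1 path_pt0 /site_add /= !addr0.
rewrite concat_blocksS path_weightE !tail_weight_cat addrA -path_weightE.
rewrite path_disp_concat_blocks big_ord_recr /= -addrA.
apply: (le_trans _ (lerD IHk (lexx _))); rewrite -!addrA lerD2l path_weightE.
rewrite /translate -addrA lerD2l lerD2l /tail_weight /= big_ord_recr big_ord1 /=.
rewrite -[X in X <= _]add0r; apply: lerD; first exact: xi_ge0.
rewrite le_eqVlt; apply/orP; left; apply/eqP; congr xi.
rewrite /site_add /path_pt /diag_site disp_S /=.
by congr (_, _); rewrite -!PoszD; congr Posz; lia.
Qed.

End DiagonalBlocks.

Lemma sum_LPP_blocks_le xi m k r w : (0 < m)%N -> (k * m < r)%N -> (forall v, 0 <= xi v w) ->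
  \sum_(j < k) LPP (translate (diag_site m j) xi) m w <= LPP xi r w.
Proof.
move=> m_gt0 km_lt xi_ge0.
have [S opt_S] := boolp.choice (fun j => LPP_attained (translate (diag_site m j) xi) m w).
have size_S j : size (S j) = (m.-1 + m.-1)%N by case: (opt_S j).
have disp_S j : path_disp (S j) = (m.-1%:Z, m.-1%:Z).
  case: (opt_S j) => size_Sj count_Sj _.
  by rewrite /path_disp count_Sj (count_negb_balanced size_Sj count_Sj).
set q := (r.-1 - k * m)%N.
set s := concat_blocks S k ++ (nseq q false ++ nseq q true).
have size_s : size s = (r.-1 + r.-1)%N.
  by rewrite size_cat (size_concat_blocks _ size_S m_gt0) size_cat !size_nseq /q; lia.
have count_s : count id s = r.-1.
  have : count id (concat_blocks S k) = (k * m)%N.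
    by have := path_disp_concat_blocks m_gt0 disp_S k; case.
  by rewrite count_cat count_cat !count_nseq /= mul0n mul1n /q => ->; lia.
apply: (le_trans _ (path_weight_le_LPP xi w size_s count_s)).
rewrite path_weightE tail_weight_cat addrA -path_weightE.
have padding_ge0 := @tail_weight_ge0 _ _ (translate (path_disp (concat_blocks S k)) xi)
  (nseq q false ++ nseq q true) w (fun v => xi_ge0 _).
apply: (le_trans _ (lerD (sum_block_weights_le m_gt0 disp_S k xi_ge0) padding_ge0)).
rewrite -[X in X <= _]addr0 -addrA; apply: lerD; last by rewrite addr0; exact: xi_ge0.
by apply: ler_sum => j _; case: (opt_S j) => _ _ ->.
Qed.

End Superadditivity.

Section Measurability.
Context d (T : measurableType d) (R : realType).
Implicit Types (f g : T -> R) (xi : int * int -> T -> R).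

Lemma measurable_ltr_set f g :
  measurable_fun setT f -> measurable_fun setT g -> measurable [set w | f w < g w].
Proof. by move=> mf mg; rewrite -[X in measurable X]setTI; exact: measurable_fun_ltr. Qed.

Lemma measurable_ler_set f g :
  measurable_fun setT f -> measurable_fun setT g -> measurable [set w | f w <= g w].
Proof. by move=> mf mg; rewrite -[X in measurable X]setTI; exact: measurable_fun_ler. Qed.

Lemma measurable_fun_bigmaxr (I : Type) (s : seq I) (p : pred I) f (F : I -> T -> R) :
  measurable_fun setT f -> (forall i, measurable_fun setT (F i)) ->
  measurable_fun setT (fun w => \big[Num.max/f w]_(i <- s | p i) F i w).
Proof.
move=> mf mF; elim: s => [|i s IHs]; first by under eq_fun do rewrite big_nil.
under eq_fun do rewrite big_cons.
by case: (p i) => //; exact: measurable_maxr.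
Qed.

Lemma measurable_LPP xi r :
  (forall v, measurable_fun setT (xi v)) -> measurable_fun setT (LPP xi r).
Proof.
by move=> mxi; apply: measurable_fun_bigmaxr => *; exact: measurable_sum.
Qed.

End Measurability.

Section TupleBoxes.
Context (R : realType) (n : nat).

Definition tuple_box (B : 'I_n -> set R) : set (n.-tuple R) :=
  [set x | forall i, B i (tnth x i)].

Definition tuple_boxes : set_system (n.-tuple R) :=
  [set X | exists2 B : 'I_n -> set R, (forall i, measurable (B i)) & X = tuple_box B].

Lemma measurable_tuple_box B : (forall i, measurable (B i)) -> measurable (tuple_box B).
Proof.
move=> mB; have -> : tuple_box B = \big[setI/setT]_(i < n) ((tnth (T:=R))^~ i @^-1` B i).
  apply/seteqP; split => x; first by move=> x_B; rewrite -bigcap_seq => i _; exact: x_B.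
  by rewrite -bigcap_seq => x_B i; apply: x_B; rewrite /= mem_index_enum.
apply: big_ind => [| A B' mA mB' | i _]; first exact: measurableT.
  exact: measurableI.
by rewrite -[X in measurable X]setTI; exact: measurable_tnth.
Qed.

Lemma tuple_measurableE : @measurable _ (n.-tuple R) = <<s tuple_boxes >>.
Proof.
apply/seteqP; split; last first.
  apply: smallest_sub; first exact: sigma_algebra_measurable.
  by move=> X [B mB ->]; exact: measurable_tuple_box.
apply: smallest_sub; first exact: smallest_sigma_algebra.
move=> X; rewrite -bigcup_seq => -[i _ [A mA <-]].
apply: sub_gen_smallest; exists (fun j => if j == i then A else setT).
  by move=> j; case: ifP.
apply/seteqP; split => x /= => [[_ x_A] j | /(_ i)]; last by rewrite eqxx.
by case: ifP => // /eqP ->.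
Qed.

Lemma tuple_boxes_setI_closed : setI_closed tuple_boxes.
Proof.
move=> X Y [B1 mB1 ->] [B2 mB2 ->]; exists (fun i => B1 i `&` B2 i).
  by move=> i; exact: measurableI.
by apply/seteqP; split => x /= => [[x_B1 x_B2] i | x_B]; [split | split => i; case: (x_B i)].
Qed.

End TupleBoxes.

Section Independence.
Context d (T : measurableType d) (R : realType) (P : probability T R).

Lemma probability_bigcup (F : (set T)^nat) : (forall i, measurable (F i)) -> trivIset setT F ->
  P (\bigcup_k F k) = (\sum_(0 <= i <oo | i \in setT) P (F i))%E.
Proof. by move=> mF tF; exact: measure_bigcup. Qed.

Definition indep_event (X : set T) : set_system T :=
  [set F | measurable F /\ P (F `&` X) = (P F * P X)%E].

Lemma dynkin_indep_event X : measurable X -> dynkin (indep_event X).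
Proof.
move=> mX; have fin_P A : measurable A -> P A = (fine (P A))%:E.
  by move=> mA; rewrite fineK // fin_num_measure.
split.
- by split => //; rewrite setTI probability_setT mul1e.
- move=> F [mF PFX]; split; first exact: measurableC.
  have PXF : P (X `\` F) = (P X - P (X `&` F))%E.
    by apply: measureD => //; apply: (le_lt_trans (probability_le1 P mX)); exact: ltry.
  rewrite probability_setC // setIC -setDE PXF setIC PFX (fin_P _ mX) (fin_P _ mF).
  by rewrite -EFinM -!EFinB -EFinM; congr EFin; ring.
- move=> F tF indep_F; have mF i : measurable (F i) by case: (indep_F i).
  split; first exact: bigcup_measurable.
  have mFX i : measurable (F i `&` X) by exact: measurableI.
  rewrite setI_bigcupl !probability_bigcup //; last exact: trivIset_setIr.
  rewrite (eq_eseriesr (g := fun k => (P X * P (F k))%E)); last first.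
    by move=> i _; case: (indep_F i) => _ ->; rewrite muleC.
  by rewrite (fin_P _ mX) nneseriesZl // muleC.
Qed.

Lemma g_sigma_measurable (G : set_system T) : G `<=` measurable -> <<s G >> `<=` measurable.
Proof. by move=> mG; apply: smallest_sub; [exact: sigma_algebra_measurable | exact: mG]. Qed.

Lemma indep_g_sigma (G1 G2 : set_system T) :
  setI_closed G1 -> setI_closed G2 -> G1 `<=` measurable -> G2 `<=` measurable ->
  (forall A B, G1 A -> G2 B -> P (A `&` B) = (P A * P B)%E) ->
  forall A B, <<s G1 >> A -> <<s G2 >> B -> P (A `&` B) = (P A * P B)%E.
Proof.
move=> G1I G2I mG1 mG2 indep_G.
have indep_G2 B : G2 B -> <<s G1 >> `<=` indep_event B.
  move=> G2B; rewrite -setI_closed_g_dynkin_g_sigma_algebra //.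
  apply: smallest_sub; first exact/dynkin_indep_event/mG2.
  by move=> A G1A; split; [exact: mG1 | exact: indep_G].
move=> A B sA sB; suff [_] : indep_event A B by rewrite setIC muleC.
move: B sB; rewrite -setI_closed_g_dynkin_g_sigma_algebra //.
apply: smallest_sub; first exact/dynkin_indep_event/(g_sigma_measurable mG1).
move=> B G2B; split; first exact: mG2.
by have [_] := indep_G2 B G2B A sA; rewrite setIC muleC.
Qed.

End Independence.

Section SiteSigmaAlgebras.
Context d (T : measurableType d) (R : realType) (P : probability T R).
Variables (nu : probability R R) (xi : int * int -> T -> R).
Hypotheses (mxi : forall v, measurable_fun setT (xi v))
  (indep_xi : mutually_independent P xi)
  (law_xi : forall v (B : set R), measurable B -> P (xi v @^-1` B) = nu B).

Lemma measurable_site_preimage v (B : set R) : measurable B -> measurable (xi v @^-1` B).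
Proof. by move=> mB; rewrite -[X in measurable X]setTI; exact: mxi. Qed.

Lemma measurable_bigcap_site_preimage (s : seq (int * int)) (B : int * int -> set R) :
  (forall v, measurable (B v)) -> measurable (\bigcap_(v in [set` s]) xi v @^-1` B v).
Proof.
move=> mB; rewrite bigcap_seq; apply: big_ind => [|? ? ? ?|v _]; first exact: measurableT.
  exact: measurableI.
exact: measurable_site_preimage.
Qed.

Lemma P_bigcap_site_preimage (s : seq (int * int)) (B : int * int -> set R) :
  uniq s -> (forall v, measurable (B v)) ->
  P (\bigcap_(v in [set` s]) xi v @^-1` B v) = (\prod_(v <- s) nu (B v))%E.
Proof. by move=> s_uniq mB; rewrite indep_xi //; apply: eq_bigr => v _; exact: law_xi. Qed.

Definition cylinder_events (D : set (int * int)) : set_system T :=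
  [set F | exists s (B : int * int -> set R),
    [/\ uniq s, (forall v, v \in s -> D v), (forall v, measurable (B v)) &
        F = \bigcap_(v in [set` s]) xi v @^-1` B v]].

Definition site_sigma (D : set (int * int)) : set_system T := <<s cylinder_events D >>.

Lemma cylinder_events_measurable D : cylinder_events D `<=` measurable.
Proof. by move=> F [s [B [_ _ mB ->]]]; exact: measurable_bigcap_site_preimage. Qed.

Lemma cylinder_events_setI_closed D : setI_closed (cylinder_events D).
Proof.
move=> F1 F2 [s1 [B1 [s1_uniq s1_D mB1 ->]]] [s2 [B2 [s2_uniq s2_D mB2 ->]]].
pose B v := (if v \in s1 then B1 v else setT) `&` (if v \in s2 then B2 v else setT).
exists (undup (s1 ++ s2)), B; split.
- exact: undup_uniq.
- by move=> v; rewrite mem_undup mem_cat => /orP[/s1_D|/s2_D].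
- by move=> v; apply: measurableI; case: ifP.
apply/seteqP; split => w.
- move=> [w_B1 w_B2] v /=; rewrite mem_undup mem_cat => _.
  by split; case: ifP => // v_s; [exact: w_B1 | exact: w_B2].
- move=> w_B; split => v /= v_s; have := w_B v; rewrite /= /B mem_undup mem_cat v_s ?orbT.
    by move=> /(_ isT) [].
  by move=> /(_ isT) [_].
Qed.

Lemma site_sigma_sub D D' : D `<=` D' -> site_sigma D `<=` site_sigma D'.
Proof.
move=> DD'; apply: smallest_sub; first exact: smallest_sigma_algebra.
move=> F [s [B [s_uniq s_D mB ->]]]; apply: sub_gen_smallest.
by exists s, B; split => // v /s_D /DD'.
Qed.

Lemma site_sigmaT D : site_sigma D setT.
Proof. by rewrite -setC0; apply: sigma_algebraC; exact: sigma_algebra0. Qed.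

Lemma site_sigmaI D A B : site_sigma D A -> site_sigma D B -> site_sigma D (A `&` B).
Proof.
move=> sA sB; have -> : A `&` B = ~` (\bigcup_i bigcup2 (~` A) (~` B) i).
  by rewrite bigcup2E setCU !setCK.
apply: sigma_algebraC; apply: sigma_algebra_bigcup => -[|[|i]] /=.
- exact: sigma_algebraC.
- exact: sigma_algebraC.
- exact: sigma_algebra0.
Qed.

Section DisjointSites.
Variables D1 D2 : set (int * int).
Hypothesis D12 : forall v, D1 v -> D2 v -> False.

Lemma cylinder_events_indep F1 F2 :
  cylinder_events D1 F1 -> cylinder_events D2 F2 -> P (F1 `&` F2) = (P F1 * P F2)%E.
Proof.
move=> [s1 [B1 [s1_uniq s1_D mB1 ->]]] [s2 [B2 [s2_uniq s2_D mB2 ->]]].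
have notin_s1 v : v \in s2 -> v \in s1 = false.
  by move=> v_s2; apply/negP => /s1_D v_D1; exact: (D12 v_D1 (s2_D _ v_s2)).
have s12_uniq : uniq (s1 ++ s2).
  by rewrite cat_uniq s1_uniq s2_uniq andbT; apply/hasPn => v /notin_s1 ->.
pose B v := if v \in s1 then B1 v else B2 v.
have -> : (\bigcap_(v in [set` s1]) xi v @^-1` B1 v) `&` (\bigcap_(v in [set` s2]) xi v @^-1` B2 v)
    = \bigcap_(v in [set` s1 ++ s2]) xi v @^-1` B v.
  apply/seteqP; split => w.
  - move=> [w_B1 w_B2] v /=; rewrite mem_cat /B; case: ifP => [v_s1 _ | _ /= v_s2].
      exact: w_B1.
    exact: w_B2.
  - move=> w_B; split => v /= v_s; have := w_B v; rewrite /= mem_cat v_s ?orbT /B => /(_ isT).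
      by rewrite v_s.
    by rewrite notin_s1.
rewrite !P_bigcap_site_preimage //; last by move=> v; rewrite /B; case: ifP.
rewrite big_cat /=; congr (_ * _)%E; rewrite big_seq_cond [RHS]big_seq_cond.
  by apply: eq_bigr => v /andP[v_s1 _]; rewrite /B v_s1.
by apply: eq_bigr => v /andP[/notin_s1 v_s1 _]; rewrite /B v_s1.
Qed.

Lemma site_sigma_indep F1 F2 :
  site_sigma D1 F1 -> site_sigma D2 F2 -> P (F1 `&` F2) = (P F1 * P F2)%E.
Proof.
apply: indep_g_sigma; try exact: cylinder_events_setI_closed;
  try exact: cylinder_events_measurable.
exact: cylinder_events_indep.
Qed.

End DisjointSites.

Section SiteValues.
Variable n : nat.
Implicit Types (L : n.-tuple (int * int)) (B : 'I_n -> set R).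

Definition site_values L (w : T) : n.-tuple R := [tuple xi (tnth L i) w | i < n].

Lemma measurable_site_values L : measurable_fun setT (site_values L).
Proof.
apply/measurable_fun_tnthP => i.
by rewrite (_ : _ \o _ = xi (tnth L i)) //; apply/funext => w; rewrite /= tnth_mktuple.
Qed.

Lemma measurable_site_values_preimage L G : measurable G -> measurable (site_values L @^-1` G).
Proof. by move=> mG; rewrite -[X in measurable X]setTI; exact: measurable_site_values. Qed.

Definition box_at L B (v : int * int) : set R := oapp B setT (insub (index v L)).

Lemma box_at_tnth L B i : uniq L -> box_at L B (tnth L i) = B i.
Proof.
move=> L_uniq; rewrite /box_at (tnth_nth (0%:Z, 0%:Z)) index_uniq ?size_tuple //.
by rewrite -[X in insub X]/(val i) valK.
Qed.

Lemma measurable_box_at L B : (forall i, measurable (B i)) -> forall v, measurable (box_at L B v).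
Proof. by move=> mB v; rewrite /box_at; case: (insub _) => [i|] /=. Qed.

Lemma site_values_preimage_box L B : uniq L ->
  site_values L @^-1` tuple_box B = \bigcap_(v in [set` L]) xi v @^-1` box_at L B v.
Proof.
move=> L_uniq; apply/seteqP; split => w.
- by move=> w_B v /= /tnthP [i ->]; rewrite box_at_tnth //; have := w_B i; rewrite /= tnth_mktuple.
- move=> w_B i /=; rewrite tnth_mktuple -(box_at_tnth B i L_uniq).
  by apply: w_B; rewrite /= mem_tnth.
Qed.

Lemma P_site_values_box L B : uniq L -> (forall i, measurable (B i)) ->
  P (site_values L @^-1` tuple_box B) = (\prod_(i < n) nu (B i))%E.
Proof.
move=> L_uniq mB; rewrite site_values_preimage_box // P_bigcap_site_preimage //.
  by rewrite big_tuple; apply: eq_bigr => i _; rewrite box_at_tnth.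
exact: measurable_box_at.
Qed.

Lemma site_values_law L L' : uniq L -> uniq L' -> forall G, measurable G ->
  P (site_values L @^-1` G) = P (site_values L' @^-1` G).
Proof.
move=> L_uniq L'_uniq G mG.
pose same_prob :=
  [set G : set (n.-tuple R) | P (site_values L @^-1` G) = P (site_values L' @^-1` G)].
have same_probT : same_prob setT by rewrite /same_prob /= !preimage_setT.
have same_prob_boxes : @tuple_boxes R n `<=` same_prob.
  by move=> X [B mB ->]; rewrite /same_prob /= !P_site_values_box.
have same_probC X : measurable X -> same_prob X -> same_prob (~` X).
  move=> mX X_same; rewrite /same_prob /=.
  have preimageC L0 : site_values L0 @^-1` (~` X) = ~` (site_values L0 @^-1` X) by [].
  rewrite !preimageC !(probability_setC P) ?X_same //; exact: measurable_site_values_preimage.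
have same_prob_bigcup (F : (set (n.-tuple R))^nat) : (forall i, measurable (F i)) ->
    trivIset setT F -> (forall i, same_prob (F i)) -> same_prob (\bigcup_k F k).
  move=> mF tF F_same; rewrite /same_prob /= !preimage_bigcup.
  have tF' L0 : trivIset setT (fun k => site_values L0 @^-1` F k).
    apply/trivIsetP => i j _ _ ij; rewrite -preimage_setI.
    by move/trivIsetP: tF => /(_ i j Logic.I Logic.I ij) ->; rewrite preimage_set0.
  rewrite !probability_bigcup //; try by move=> i; exact: measurable_site_values_preimage.
  by apply: eq_eseriesr => i _; exact: F_same.
have := dynkin_induction (@tuple_measurableE R n) (@tuple_boxes_setI_closed R n)
  same_probT same_prob_boxes same_probC same_prob_bigcup.
by apply; rewrite -tuple_measurableE.
Qed.

Lemma site_sigma_site_values L (D : set (int * int)) : uniq L -> (forall i, D (tnth L i)) ->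
  forall G, measurable G -> site_sigma D (site_values L @^-1` G).
Proof.
move=> L_uniq L_D; rewrite tuple_measurableE; apply: smallest_sub.
  split => /=.
  - by rewrite preimage_set0; exact: sigma_algebra0.
  - move=> A sA.
    have -> : site_values L @^-1` (setT `\` A) = setT `\` (site_values L @^-1` A) by [].
    exact: sigma_algebraCD.
  - by move=> F sF; rewrite preimage_bigcup; exact: sigma_algebra_bigcup.
move=> X [B mB ->]; rewrite /= site_values_preimage_box //; apply: sub_gen_smallest.
exists (tval L), (box_at L B); split => //; last exact: measurable_box_at.
by move=> v /tnthP [i ->].
Qed.

End SiteValues.


Section DiagonalBlockEvents.
Variable m : nat.
Hypothesis m_gt0 : (0 < m)%N.

Definition box_sites : seq (int * int) :=
  [seq (a.+1%:Z, b.+1%:Z) | a <- iota 0 m, b <- iota 0 m].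

Lemma box_sites_uniq : uniq box_sites.
Proof.
apply: allpairs_uniq; try exact: iota_uniq.
by move=> [a b] [a' b'] _ _ /= [e1 e2]; congr pair; lia.
Qed.

Lemma mem_box_sites a b : (a < m)%N -> (b < m)%N -> (a.+1%:Z, b.+1%:Z) \in box_sites.
Proof. by move=> a_lt b_lt; apply/allpairsP; exists (a, b); rewrite !mem_iota. Qed.

Definition block_sites j : (size box_sites).-tuple (int * int) :=
  map_tuple (site_add ^~ (diag_site m j)) (in_tuple box_sites).

Lemma block_sites_uniq j : uniq (block_sites j).
Proof.
rewrite map_inj_uniq; first exact: box_sites_uniq.
by move=> [a b] [a' b'] [/addIr -> /addIr ->].
Qed.

Lemma block_sites_column j i :
  ((j * m)%:Z < (tnth (block_sites j) i).1) && ((tnth (block_sites j) i).1 <= (j.+1 * m)%:Z).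
Proof.
rewrite tnth_map; case/allpairsP: (mem_tnth i (in_tuple box_sites)) => -[a b] /= [].
by rewrite !mem_iota => a_lt _ ->; rewrite /site_add /diag_site /=; apply/andP; split; lia.
Qed.

(* A configuration of weights listed along [box_sites], extended by [0] off the box. *)
Definition box_weight (v : int * int) (x : (size box_sites).-tuple R) : R :=
  oapp (tnth x) 0 (insub (index v box_sites)).

Definition box_LPP (x : (size box_sites).-tuple R) : R := LPP box_weight m x.

Lemma measurable_box_LPP : measurable_fun setT box_LPP.
Proof.
apply: measurable_LPP => v; rewrite /box_weight; case: (insub _) => [i|] /=.
  exact: measurable_tnth.
exact: measurable_cst.
Qed.

Lemma box_LPP_site_values j w :
  box_LPP (site_values (block_sites j) w) = LPP (translate (diag_site m j) xi) m w.
Proof.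
apply: eq_LPP => // a b a_lt b_lt.
have ab_mem := mem_box_sites a_lt b_lt; have := ab_mem; rewrite -index_mem => ab_index.
rewrite /box_weight (insubT (fun k => k < size box_sites)%N ab_index) /=.
rewrite /site_values tnth_mktuple tnth_map /translate.
by rewrite (tnth_nth (0%:Z, 0%:Z)) /= nth_index.
Qed.

Variable c : R.

Definition block_event j : set T :=
  site_values (block_sites j) @^-1` [set x | c < box_LPP x].

Lemma measurable_box_LPP_gt : measurable [set x | c < box_LPP x].
Proof. by apply: measurable_ltr_set; [exact: measurable_cst | exact: measurable_box_LPP]. Qed.

Lemma P_block_event j : P (block_event j) = P [set w | c < LPP xi m w].
Proof.
rewrite /block_event.
rewrite (site_values_law (block_sites_uniq j) (block_sites_uniq 0) measurable_box_LPP_gt).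
have LPP_block0 w : LPP (translate (diag_site m 0) xi) m w = LPP xi m w.
  by apply: eq_LPP => // a b _ _; rewrite /translate /site_add /= !addr0.
by congr (P _); apply/seteqP; split => w; rewrite /preimage /= box_LPP_site_values LPP_block0.
Qed.

Definition columns_le (K : nat) := [set v : int * int | v.1 <= K%:Z].
Definition columns_gt (K : nat) := [set v : int * int | K%:Z < v.1].

Definition first_blocks_event k : set T := \big[setI/setT]_(j < k) block_event j.

Lemma measurable_first_blocks_event k : measurable (first_blocks_event k).
Proof.
apply: big_ind => [|? ? ? ?|j _]; first exact: measurableT.
  exact: measurableI.
exact: measurable_site_values_preimage measurable_box_LPP_gt.
Qed.

(* Block [j] only sees the columns [j m < x <= (j+1) m], so the blocks are independent. *)
Lemma first_blocks_event_prob (delta : R) : 0 <= delta ->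
  (delta%:E <= P [set w | (c < LPP xi m w)%R])%E ->
  forall k, site_sigma (columns_le (k * m)) (first_blocks_event k) /\
            ((delta ^+ k)%:E <= P (first_blocks_event k))%E.
Proof.
move=> delta_ge0 delta_le; elim=> [|k [IH_sigma IH_prob]].
  by rewrite /first_blocks_event big_ord0 probability_setT expr0; split => //; exact: site_sigmaT.
have block_right : site_sigma (columns_gt (k * m)) (block_event k).
  apply: site_sigma_site_values; [exact: block_sites_uniq | | exact: measurable_box_LPP_gt].
  by move=> i; case/andP: (block_sites_column k i).
have block_left : site_sigma (columns_le (k.+1 * m)) (block_event k).
  apply: site_sigma_site_values; [exact: block_sites_uniq | | exact: measurable_box_LPP_gt].
  by move=> i; case/andP: (block_sites_column k i).
rewrite /first_blocks_event big_ord_recr /= -/(first_blocks_event k); split.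
  apply: site_sigmaI => //; apply: (site_sigma_sub _ IH_sigma) => v; rewrite /columns_le /=.
  by move/le_trans; apply; rewrite lez_nat leq_mul.
rewrite (site_sigma_indep (D1 := columns_le (k * m)) (D2 := columns_gt (k * m))) //; last first.
  by move=> v; rewrite /columns_le /columns_gt /= => /le_lt_trans lt /lt; rewrite ltxx.
rewrite exprSr EFinM P_block_event; apply: lee_pmul => //.
by rewrite lee_fin exprn_ge0.
Qed.

End DiagonalBlockEvents.


Definition nonneg_field : set T := [set w | forall v, 0 <= xi v w].

Lemma nonneg_field_as : nu [set x : R | x < 0] = 0%E ->
  measurable nonneg_field /\ P (~` nonneg_field) = 0%E.
Proof.
move=> nu_neg.
pose neg_at (k : nat) : set T :=
  oapp (fun v => xi v @^-1` [set x : R | x < 0]) set0 (unpickle k : option (int * int)).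
have measurable_lt0 : measurable [set x : R | x < 0].
  by apply: measurable_ltr_set; [exact: measurable_id | exact: measurable_cst].
have mneg_at k : measurable (neg_at k).
  by rewrite /neg_at; case: (unpickle k) => [v|] //=; exact: measurable_site_preimage.
have negE : ~` nonneg_field = \bigcup_k neg_at k.
  apply/seteqP; split => w.
  - move=> /= /existsNP [v /negP]; rewrite -ltNge => xi_neg.
    by exists (pickle v) => //; rewrite /neg_at pickleK.
  - move=> [k _]; rewrite /neg_at; case: (unpickle k) => [v|] //= xi_neg w_nonneg.
    by move: (w_nonneg v); rewrite leNgt xi_neg.
have m_neg : measurable (\bigcup_k neg_at k) by exact: bigcup_measurable.
split; first by rewrite -(setCK nonneg_field) negE; exact: measurableC.
rewrite negE; apply: (measure_negligible m_neg); apply: negligible_bigcup => k.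
apply/negligibleP => //; rewrite /neg_at; case: (unpickle k) => [v|] //=.
by rewrite law_xi.
Qed.

Lemma LPP_ge_blocks_prob (delta c tau : R) (m k r : nat) :
  0 <= delta -> nu [set x : R | x < 0] = 0%E -> (0 < m)%N -> (k * m < r)%N ->
  tau <= k%:R * c -> (delta%:E <= P [set w | (c < LPP xi m w)%R])%E ->
  ((delta ^+ k)%:E <= P [set w | (tau <= LPP xi r w)%R])%E.
Proof.
move=> delta_ge0 nu_neg m_gt0 km_lt tau_le delta_le.
have [_ P_blocks] := first_blocks_event_prob m_gt0 delta_ge0 delta_le k.
have [m_nonneg P_neg] := nonneg_field_as nu_neg.
have m_blocks := measurable_first_blocks_event m c k.
have m_tau : measurable [set w | tau <= LPP xi r w].
  by apply: measurable_ler_set; [exact: measurable_cst | exact: measurable_LPP].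
set E := first_blocks_event m c k.
apply: (le_trans P_blocks).
have -> : P E = (P (E `\` nonneg_field) + P (E `&` nonneg_field))%E by exact: measureDI.
have -> : P (E `\` nonneg_field) = 0%E.
  apply/eqP; rewrite eq_le measure_ge0 andbT -P_neg; apply: le_measure; rewrite ?inE.
  - exact: measurableD.
  - exact: measurableC.
  - by move=> w [].
rewrite add0e; apply: le_measure; rewrite ?inE //; first exact: measurableI.
move=> w [w_blocks w_nonneg] /=.
apply: (le_trans tau_le); apply: (le_trans _ (sum_LPP_blocks_le m_gt0 km_lt w_nonneg)).
rewrite mulr_natl -[in X in X <= _](card_ord k) -sumr_const; apply: ler_sum => j _; apply/ltW.
move: w_blocks; rewrite /E /first_blocks_event -bigcap_seq => /(_ j (mem_index_enum _)).
by rewrite /block_event /preimage /= box_LPP_site_values.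
Qed.

End SiteSigmaAlgebras.

Section BlockScale.
Variable R : realType.

Lemma powR13_cube (x : R) : 0 <= x -> (x `^ (1/3)) ^+ 3 = x.
Proof.
move=> x_ge0; rewrite -powR_mulrn ?powR_ge0 // -powRrM.
by rewrite (_ : 1 / 3 * 3%:R = 1) ?powRr1 //; field.
Qed.

Lemma powR23_sqr (x : R) : 0 <= x -> x `^ (2/3) = (x `^ (1/3)) ^+ 2.
Proof. by move=> x_ge0; rewrite -powR_mulrn ?powR_ge0 // -powRrM; congr (_ `^ _); field. Qed.

Lemma cube_le_powR13 (x y : R) : 0 <= y -> y ^+ 3 <= x -> y <= x `^ (1/3).
Proof.
move=> y_ge0 y3_le; have x_ge0 : 0 <= x by apply: le_trans y3_le; exact: exprn_ge0.
have <- : (y ^+ 3) `^ (1/3) = y.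
  by rewrite -powR_mulrn // -powRrM (_ : 3%:R * (1/3) = 1) ?powRr1 //; field.
by apply: ge0_ler_powR => //; rewrite nnegrE exprn_ge0.
Qed.

Lemma powR32 (x : R) : 0 < x -> x `^ (3/2) = x * Num.sqrt x.
Proof.
move=> x_gt0; rewrite (_ : 3/2 = 1 + 2^-1); last by field.
rewrite powRD; last by apply/implyP => _; rewrite gt_eqF.
by rewrite powRr1 ?ltW // powR12_sqrt ?ltW.
Qed.

Lemma exists_sqrt_scale (C theta u : R) : 0 < C -> 0 <= u -> C < theta < C * u ^+ 2 ->
  exists s, [/\ theta = C * s ^+ 2, 1 <= s & s < u].
Proof.
move=> C_gt0 u_ge0 /andP[C_lt theta_lt]; exists (Num.sqrt (theta / C)).
have s2E : Num.sqrt (theta / C) ^+ 2 = theta / C by rewrite sqr_sqrtr // divr_ge0 //; lra.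
split; first by rewrite s2E; field; lra.
  by rewrite -(expr_ge1 (n := 2)) ?sqrtr_ge0 // s2E ler_pdivlMr //; lra.
rewrite -(ltr_pXn2r (n := 2)) ?nnegrE ?sqrtr_ge0 // s2E ltr_pdivrMr //; lra.
Qed.

Lemma exists_nat_between (s : R) : 0 <= s -> 1 <= s -> exists j : nat, 2 * s < j%:R <= 3 * s.
Proof.
move=> s_ge0 s_ge1; exists (Num.truncn (2 * s)).+1.
have /andP[trunc_le lt_trunc] : (Num.truncn (2 * s))%:R <= 2 * s < (Num.truncn (2 * s)).+1%:R.
  by apply: truncn_itv; lra.
by apply/andP; split => //; move: trunc_le; rewrite -natr1; lra.
Qed.

Lemma block_length_bounds (k r r1 : nat) : (0 < k)%N -> (8 * r1.+1 * k <= r)%N ->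
  let m := (r.-1 %/ k)%N in
  [/\ (r1 < m)%N, (k * m < r)%N, (r <= 8 * (k * m))%N & (r <= k * m + k)%N].
Proof.
move=> k_gt0 k_le m; have := leq_divM r.-1 k; have := ltn_ceil r.-1 k_gt0.
have r_gt0 : (0 < r)%N by apply: leq_trans k_le; rewrite !muln_gt0.
rewrite -/m mulSn mulnC => r_lt km_le.
have : (8 * r1.+1 <= m.+1)%N.
  rewrite -(leq_pmul2l k_gt0); apply: leq_trans (_ : r <= _)%N; first by rewrite mulnC.
  by rewrite mulnS addnC; lia.
by split; lia.
Qed.

Lemma block_count_le (t s rho : R) (j r r1 : nat) : 0 < t -> t <= 1 ->
  216 * r1.+1%:R * t <= 1 -> 0 <= s -> s < t * rho -> j%:R <= 3 * s -> rho ^+ 3 = r%:R ->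
  (8 * r1.+1 * j ^ 3 <= r)%N.
Proof.
move=> t_gt0 t_le1 t_small s_ge0 s_lt j_le rho3.
have t3_le : t ^+ 3 <= t by rewrite -[leRHS]expr1 ler_wiXn2l //; lra.
have j3_le : j%:R ^+ 3 <= 27 * t * r%:R :> R.
  have : j%:R ^+ 3 <= (3 * (t * rho)) ^+ 3 by apply: lerXn2r; rewrite ?nnegrE //; lra.
  have -> : (3 * (t * rho)) ^+ 3 = 27 * t ^+ 3 * r%:R by rewrite -rho3; ring.
  have : 27 * t ^+ 3 * r%:R <= 27 * t * r%:R :> R by apply: ler_wpM2r => //; rewrite ler_pM2l.
  lra.
rewrite -(ler_nat R) natrM natrX natrM.
apply: (le_trans (_ : _ <= 8 * r1.+1%:R * (27 * t * r%:R))).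
  by apply: ler_wpM2l => //; rewrite mulr_ge0.
have -> : 8 * r1.+1%:R * (27 * t * r%:R) = (216 * r1.+1%:R * t) * r%:R :> R by ring.
exact: ler_piMl.
Qed.


Lemma blocks_deviation_ge (C rho : R) (j m r : nat) : 0 < C -> 0 < rho -> (0 < j)%N ->
  rho ^+ 3 = r%:R -> (r <= 8 * (j ^ 3 * m))%N ->
  C * j%:R ^+ 2 * rho / 2 <= (j ^ 3)%:R * (C * m%:R `^ (1/3)).
Proof.
move=> C_gt0 rho_gt0 j_gt0 rho3 r_le; have j_gt0' : 0 < j%:R :> R by rewrite ltr0n.
set y := rho / (2 * j%:R).
have y_le : y <= m%:R `^ (1/3).
  apply: cube_le_powR13; first by apply: divr_ge0; lra.
  have -> : y ^+ 3 = r%:R / (8 * j%:R ^+ 3) by rewrite /y -rho3; field; lra.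
  rewrite ler_pdivrMr; last by apply: mulr_gt0 => //; exact: exprn_gt0.
  by rewrite -natrX (_ : m%:R * _ = (8 * (j ^ 3 * m))%:R) ?ler_nat // !natrM; ring.
have -> : C * j%:R ^+ 2 * rho / 2 = (j ^ 3)%:R * (C * y) by rewrite /y natrX; field; lra.
by rewrite ler_pM2l ?ltr0n ?expn_gt0 ?j_gt0 // ler_pM2l.
Qed.

Lemma mean_discretization_le (mu : R) (k m r : nat) : (k * m <= r)%N -> (r <= k * m + k)%N ->
  mu * r%:R <= k%:R * (mu * m%:R) + `|mu| * k%:R.
Proof.
move=> km_le r_le.
have km_leR : k%:R * m%:R <= r%:R :> R by rewrite -natrM ler_nat.
have r_leR : r%:R <= k%:R * m%:R + k%:R :> R by rewrite -natrM -natrD ler_nat.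
have : mu * (r%:R - k%:R * m%:R) <= `|mu| * k%:R.
  apply: (le_trans (ler_wpM2r _ (ler_norm mu))); first lra.
  by apply: ler_wpM2l => //; lra.
lra.
Qed.

Lemma mean_plus_deviation_le_blocks (mu C t theta s rho : R) (j m r : nat) :
  0 < C -> 0 <= t -> 0 < rho -> 0 <= s -> theta = C * s ^+ 2 -> s < t * rho ->
  12 * `|mu| * t <= C -> 2 * s < j%:R -> j%:R <= 3 * s -> rho ^+ 3 = r%:R ->
  (r <= 8 * (j ^ 3 * m))%N -> (j ^ 3 * m <= r)%N -> (r <= j ^ 3 * m + j ^ 3)%N ->
  mu * r%:R + theta * rho <= (j ^ 3)%:R * (mu * m%:R + C * m%:R `^ (1/3)).
Proof.
move=> C_gt0 t_ge0 rho_gt0 s_ge0 thetaE s_lt t_small j_gt j_le rho3 r_le8 km_le r_le.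
have j_gt0 : (0 < j)%N by rewrite -(ltr0n R); lra.
have deviation := blocks_deviation_ge C_gt0 rho_gt0 j_gt0 rho3 r_le8.
have discretization := mean_discretization_le mu km_le r_le.
have theta_le : theta * rho <= C * j%:R ^+ 2 * rho / 4.
  have : 0 <= C * rho * (j%:R ^+ 2 - (2 * s) ^+ 2).
    by apply: mulr_ge0; [apply: mulr_ge0; lra | rewrite subr_ge0 lerXn2r ?nnegrE; lra].
  rewrite thetaE; lra.
have mu_le : `|mu| * (j ^ 3)%:R <= C * j%:R ^+ 2 * rho / 4.
  have : `|mu| * j%:R <= 3 * (`|mu| * (t * rho)).
    apply: (le_trans (ler_wpM2l (normr_ge0 mu) j_le)).
    by rewrite mulrCA ler_pM2l // ler_wpM2l //; lra.
  have : 12 * `|mu| * t * rho <= C * rho by rewrite ler_pM2r.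
  move=> ? ?; have : 0 <= j%:R ^+ 2 * (C * rho - 4 * (`|mu| * j%:R)).
    by apply: mulr_ge0; [exact: exprn_ge0 | lra].
  by rewrite natrX; lra.
rewrite mulrDr; lra.
Qed.

Lemma expR_le_pow_blocks (C delta theta s : R) (j : nat) : 0 < C -> 0 < delta -> delta <= 1 ->
  0 <= s -> theta = C * s ^+ 2 -> 0 < theta -> j%:R <= 3 * s ->
  expR (- ((27 * - ln delta / (C * Num.sqrt C) + 1) * theta `^ (3/2))) <= delta ^+ (j ^ 3).
Proof.
move=> C_gt0 delta_gt0 delta_le1 s_ge0 thetaE theta_gt0 j_le.
have j3_le : (j ^ 3)%:R <= 27 * s ^+ 3 :> R.
  by rewrite natrX (_ : 27 * _ = (3 * s) ^+ 3); [apply: lerXn2r; rewrite ?nnegrE //; lra | ring].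
have sqrtC_gt0 : 0 < Num.sqrt C by rewrite sqrtr_gt0.
have sqrt_theta : Num.sqrt theta = Num.sqrt C * s.
  by rewrite thetaE sqrtrM ?ltW // sqrtr_sqr ger0_norm.
rewrite -[delta in leRHS]lnK ?posrE // -expRM_natl ler_expR powR32 // sqrt_theta.
have -> : (27 * - ln delta / (C * Num.sqrt C) + 1) * (theta * (Num.sqrt C * s)) =
    27 * (- ln delta) * s ^+ 3 + C * Num.sqrt C * s ^+ 3.
  by rewrite thetaE; field; rewrite !gt_eqF.
have : 27 * s ^+ 3 * ln delta <= (j ^ 3)%:R * ln delta by rewrite ler_wnM2r // ln_le0.
have : 0 <= C * Num.sqrt C * s ^+ 3 by rewrite !mulr_ge0 ?exprn_ge0 // ltW.
lra.
Qed.

Lemma exists_block_scale (mu C : R) (r1 : nat) : 0 < C ->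
  exists t : R, [/\ 0 < t, t <= 1, 12 * `|mu| * t <= C & 216 * r1.+1%:R * t <= 1].
Proof.
move=> C_gt0; have r1_gt0 : 0 < 216 * r1.+1%:R :> R by rewrite mulr_gt0 // ltr0n.
have mu_gt0 : 0 < 12 * `|mu| + 1 :> R by rewrite ltr_wpDl ?mulr_ge0.
exists (Num.min 1 (Num.min (C / (12 * `|mu| + 1)) (1 / (216 * r1.+1%:R)))); split.
- by rewrite !lt_min ltr01 !divr_gt0.
- by rewrite ge_min lexx.
- have : Num.min 1 (Num.min (C / (12 * `|mu| + 1)) (1 / (216 * r1.+1%:R))) <= C / (12 * `|mu| + 1).
    by rewrite !ge_min lexx orbT.
  set t := Num.min _ _; rewrite ler_pdivlMr // => t_le.
  have : 0 <= t by rewrite !le_min ler01 !divr_ge0 // ?ltW.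
  nra.
- have : Num.min 1 (Num.min (C / (12 * `|mu| + 1)) (1 / (216 * r1.+1%:R))) <= 1 / (216 * r1.+1%:R).
    by rewrite !ge_min lexx !orbT.
  by rewrite ler_pdivlMr // mulrC.
Qed.

(* Splitting the diagonal into [k = j^3] blocks of length [m] with [j ~ 2 sqrt(theta / C)]. *)
Lemma block_decomposition (mu C t delta theta : R) (r1 r : nat) :
  0 < C -> 0 < t -> t <= 1 -> 12 * `|mu| * t <= C -> 216 * r1.+1%:R * t <= 1 ->
  0 < delta -> delta <= 1 -> (0 < r)%N -> C < theta -> theta < C * t ^+ 2 * r%:R `^ (2/3) ->
  exists m k : nat, [/\ (r1 < m)%N, (k * m < r)%N,
    mu * r%:R + theta * r%:R `^ (1/3) <= k%:R * (mu * m%:R + C * m%:R `^ (1/3)) &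
    expR (- ((27 * - ln delta / (C * Num.sqrt C) + 1) * theta `^ (3/2))) <= delta ^+ k].
Proof.
move=> C_gt0 t_gt0 t_le1 t_mu t_r1 delta_gt0 delta_le1 r_gt0 C_lt theta_lt.
have r_ge0 : 0 <= r%:R :> R by [].
set rho := r%:R `^ (1/3); have rho_gt0 : 0 < rho by rewrite powR_gt0 // ltr0n.
have rho3 : rho ^+ 3 = r%:R by rewrite powR13_cube.
move: theta_lt; rewrite powR23_sqr // -/rho -mulrA -exprMn => theta_lt.
have [s [thetaE s_ge1 s_lt]] : exists s, [/\ theta = C * s ^+ 2, 1 <= s & s < t * rho].
  by apply: exists_sqrt_scale => //; [rewrite mulr_ge0 ?ltW | rewrite C_lt].
have s_ge0 : 0 <= s by lra.
have [j /andP[j_gt j_le]] := exists_nat_between s_ge0 s_ge1.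
have j3_gt0 : (0 < j ^ 3)%N by rewrite expn_gt0 -(ltr0n R); lra.
have := block_count_le t_gt0 t_le1 t_r1 s_ge0 s_lt j_le rho3.
move=> /(block_length_bounds j3_gt0) [m_gt km_lt r_le8 r_le].
exists (r.-1 %/ j ^ 3)%N, (j ^ 3)%N; split => //.
  exact: (mean_plus_deviation_le_blocks C_gt0 (ltW t_gt0) rho_gt0 s_ge0 thetaE s_lt t_mu
    j_gt j_le rho3 r_le8 (ltnW km_lt) r_le).
by apply: (expR_le_pow_blocks C_gt0 delta_gt0 delta_le1 s_ge0 thetaE _ j_le); lra.
Qed.

End BlockScale.

Lemma fine_le_upper_bound (R : realType) (a b : R) (x : \bar R) :
  (a%:E <= x <= b%:E)%E -> fine x <= b.
Proof. by case: x => [x||] /andP[]; rewrite ?lee_fin ?leye_eq ?leeNy_eq. Qed.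

Unset Implicit Arguments.

Theorem theorem2 (d : measure_display) (T : measurableType d) (R : realType)
  (P : probability T R) (nu : probability R R) (xi : int * int -> T -> R) (mu : R) :
  (forall v, measurable_fun setT (xi v)) ->
  mutually_independent P xi ->
  (forall v (B : set R), measurable B -> P (xi v @^-1` B) = nu B) ->
  nu [set x : R | x < 0] = 0%E ->
  ((fun r : nat => ('E_P[LPP xi r] * ((r%:R)^-1)%:E)%E) @ \oo --> mu%:E) ->
  (exists g1 g2 : R, 0 < g1 /\ 0 < g2 /\
     \forall r \near \oo,
       ((mu * r%:R - g1 * (r%:R `^ (1/3)))%:E <= 'E_P[LPP xi r] <=
        (mu * r%:R - g2 * (r%:R `^ (1/3)))%:E)%E) ->
  (exists (delta C : R) (r1 : nat), 0 < delta /\ 0 < C /\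
     forall r : nat, (r1 < r)%N ->
       (delta%:E <= P [set w | (LPP xi r w - mu * r%:R > C * (r%:R `^ (1/3)))%R])%E) ->
  exists (c eta theta0 : R) (r0 : nat), 0 < c /\ 0 < eta /\
    forall (r : nat) (theta : R), (r0 < r)%N ->
      theta0 < theta -> theta < eta * (r%:R `^ (2/3)) ->
      ((expR (- (c * theta `^ (3/2))))%:E <=
        P [set w | (LPP xi r w - fine 'E_P[LPP xi r] >= theta * (r%:R `^ (1/3)))%R])%E.
Proof.
(* Only the upper bound of (i) is used, through E[X_r] <= mu r. *)
move=> mxi indep_xi law_xi nu_neg _ [g1 [g2 [_ [g2_gt0 [N _ mean_bound]]]]].
move=> [delta [C [r1 [delta_gt0 [C_gt0 dev_prob]]]]].
have delta_le1 : delta <= 1.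
  rewrite -lee_fin; apply: (le_trans (dev_prob r1.+1 (ltnSn _))); apply: probability_le1.
  apply: measurable_ltr_set; first exact: measurable_cst.
  by apply: measurable_funB; [exact: measurable_LPP | exact: measurable_cst].
have [t [t_gt0 t_le1 t_mu t_r1]] := exists_block_scale mu r1 C_gt0.
exists (27 * - ln delta / (C * Num.sqrt C) + 1), (C * t ^+ 2), C, N; split.
  by rewrite ltr_wpDl // !mulr_ge0 ?oppr_ge0 ?ln_le0 // invr_ge0 mulr_ge0 ?sqrtr_ge0 // ltW.
split; first by rewrite mulr_gt0 ?exprn_gt0.
move=> r theta r_gt C_lt theta_lt.
have r_gt0 : (0 < r)%N by apply: leq_ltn_trans r_gt.
have [m [k [m_gt km_lt blocks_ge rate_le]]] :=
  block_decomposition C_gt0 t_gt0 t_le1 t_mu t_r1 delta_gt0 delta_le1 r_gt0 C_lt theta_lt.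
have mean_le : fine 'E_P[LPP xi r] <= mu * r%:R.
  apply: (le_trans (fine_le_upper_bound (mean_bound r (ltnW r_gt)))).
  by rewrite lerBlDr lerDl mulr_ge0 ?powR_ge0 // ltW.
have dev_m : (delta%:E <= P [set w | (mu * m%:R + C * m%:R `^ (1/3) < LPP xi m w)%R])%E.
  rewrite (_ : [set w | _] = [set w | (LPP xi m w - mu * m%:R > C * m%:R `^ (1/3))%R]).
    exact: dev_prob.
  by apply/seteqP; split => w /=; rewrite ltrBrDl addrC.
rewrite (_ : [set w | _] = [set w | (fine 'E_P[LPP xi r] + theta * r%:R `^ (1/3) <= LPP xi r w)%R]).
  apply: le_trans (LPP_ge_blocks_prob mxi indep_xi law_xi (ltW delta_gt0) nu_neg _ km_lt _ dev_m).
  - by rewrite lee_fin.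
  - by apply: leq_ltn_trans m_gt.
  - by apply: le_trans blocks_ge; rewrite lerD2r.
by apply/seteqP; split => w /=; rewrite lerBrDl addrC.
Qed.
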